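(* Let $G$ and $H$ be finite simple graphs with $\delta(G)\le\delta(H)$. Let $S$ be a minimum edge-cut in $G\times H$ and let $B,W$ be the connected components of $(G\times H)-S$. If for every $(x,y)\in V(G\times H)$ either $N_G(x)\times\{y\}\subseteq B$ or $N_G(x)\times\{y\}\subseteq W$, then $S$ is of type 2, 4, 6 or 8.
   Context: The direct product $G\times H$ has vertex set $V(G)\times V(H)$, with $(x_1,y_1)$ adjacent to $(x_2,y_2)$ if and only if $x_1x_2\in E(G)$ and $y_1y_2\in E(H)$. $\delta(F)$ is the minimum degree of $F$ and $N_G(x)$ the open neighbourhood of $x$ in $G$. For a minimum edge-cut $S$ of $G\times H$, $B$ (black) and $W$ (white) are the two connected components of $(G\times H)-S$. The types are the following shapes of $(B,W)$ (up to interchanging $B$ and $W$), all partitions being disjoint unions: Type 2: $B=V(G)\times B'$, $W=V(G)\times W'$ with $V(H)=B'\cup W'$. Type 4: $V(G)=X_1\cup X_2$, $V(H)=Y_1\cup Y_2$, $B=(X_1\times Y_1)\cup(X_2\times Y_2)$, $W=(X_1\times Y_2)\cup(X_2\times Y_1)$. Type 6: $V(G)=X\cup Y$, $V(H)=C_1\cup C_2\cup C_3$, $B=(X\times C_1)\cup(Y\times C_2)$, $W=(X\times C_2)\cup(Y\times C_1)\cup(V(G)\times C_3)$. Type 8: $V(G)=X\cup Y$, $V(H)=C_1\cup C_2\cup C_3\cup C_4$, $B=(X\times C_1)\cup(Y\times C_2)\cup(V(G)\times C_4)$, $W=(X\times C_2)\cup(Y\times C_1)\cup(V(G)\times C_3)$.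 (In the paper these types are given by a figure: in types 6 and 8 each $G$-layer $V(G)\times\{y\}$ is either monochromatic or split along a fixed partition $X\cup Y$ of $V(G)$.) *)

From mathcomp Require Import all_boot.
Set Implicit Arguments.
Unset Strict Implicit.
Unset Printing Implicit Defensive.

Section Graphs.
Variable T : finType.

Definition simple_graph (e : rel T) : Prop := symmetric e /\ irreflexive e.

Definition nbhd (e : rel T) (x : T) : {set T} := [set y | e x y].

(* minimum degree delta (equals the true minimum whenever T is nonempty) *)
Definition mindeg (e : rel T) : nat := \big[minn/#|T|]_(x : T) #|nbhd e x|.

Definition edge_set (e : rel T) : {set {set T}} :=
  [set [set u.1; u.2] | u in [set u : T * T | e u.1 u.2]].

Definition remove_edges (e : rel T) (S : {set {set T}}) : rel T :=
  fun x y => e x y && ([set x; y] \notin S).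

Definition connected_rel (e : rel T) : Prop := forall x y, connect e x y.

Definition edge_cut (e : rel T) (S : {set {set T}}) : Prop :=
  S \subset edge_set e /\ ~ connected_rel (remove_edges e S).

Definition min_edge_cut (e : rel T) (S : {set {set T}}) : Prop :=
  edge_cut e S /\ forall S', edge_cut e S' -> #|S| <= #|S'|.

Definition component (e : rel T) (C : {set T}) : Prop :=
  exists x, C = [set y | connect e x y].

Definition is_partition (s : seq {set T}) : Prop :=
  pairwise (fun A B : {set T} => [disjoint A & B]) s /\ \bigcup_(A <- s) A = [set: T].

End Graphs.

(* direct (tensor) product G x H *)
Definition prod_rel (T1 T2 : finType) (e1 : rel T1) (e2 : rel T2) : rel (T1 * T2) :=
  fun u v => e1 u.1 v.1 && e2 u.2 v.2.

Section Types.
Variables (VG VH : finType).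
Implicit Types B W : {set VG * VH}.

Definition type2 B W : Prop :=
  exists B' W' : {set VH}, is_partition [:: B'; W'] /\
    B = setX [set: VG] B' /\ W = setX [set: VG] W'.

Definition type4 B W : Prop :=
  exists (X1 X2 : {set VG}) (Y1 Y2 : {set VH}),
    is_partition [:: X1; X2] /\ is_partition [:: Y1; Y2] /\
    B = setX X1 Y1 :|: setX X2 Y2 /\ W = setX X1 Y2 :|: setX X2 Y1.

Definition type6 B W : Prop :=
  exists (X Y : {set VG}) (C1 C2 C3 : {set VH}),
    is_partition [:: X; Y] /\ is_partition [:: C1; C2; C3] /\
    B = setX X C1 :|: setX Y C2 /\
    W = setX X C2 :|: setX Y C1 :|: setX [set: VG] C3.

Definition type8 B W : Prop :=
  exists (X Y : {set VG}) (C1 C2 C3 C4 : {set VH}),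
    is_partition [:: X; Y] /\ is_partition [:: C1; C2; C3; C4] /\
    B = setX X C1 :|: setX Y C2 :|: setX [set: VG] C4 /\
    W = setX X C2 :|: setX Y C1 :|: setX [set: VG] C3.

Definition type_2468 B W : Prop := type2 B W \/ type4 B W \/ type6 B W \/ type8 B W.

End Types.

From mathcomp Require Import all_boot.

Set Implicit Arguments.
Unset Strict Implicit.
Unset Printing Implicit Defensive.

(* In each layer V(G) x {y}, monochromatic neighbourhoods give two vertices
   of G with a common neighbour the same colour, hence also any two vertices
   joined by a walk of even length.  If G is connected, every vertex is joined
   by an even walk either to a fixed x0 or to a neighbour of x0, and all
   neighbours of x0 share a colour in each layer; so the colour of (x, y) only
   depends on y and on whether x lies in the even class X of x0.  This is
   type 8, with C1, ..., C4 the four possible colourings of a layer.  If G is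
   disconnected, projecting walks of (G x H) - S onto G shows that B and its
   complement W each lie over a single component of G, so B = C x V(H): a
   degenerate type 8. *)

Lemma connect_homo (T1 T2 : finType) (e1 : rel T1) (e2 : rel T2)
    (f : T1 -> T2) :
  {homo f : x y / e1 x y >-> e2 x y} ->
  {homo f : x y / connect e1 x y >-> connect e2 x y}.
Proof.
move=> hf x y /connectP[p]; elim: p x => [|z p IH] x /=; first by move=> _ ->.
by case/andP=> /hf exz /IH hz /hz; exact: connect_trans (connect1 exz).
Qed.

Lemma is_partition_count (T : finType) (s : seq {set T}) :
  (forall x, count (fun A : {set T} => x \in A) s = 1) -> is_partition s.
Proof.
move=> s1; split; last first.
  apply/setP=> x; rewrite bigcup_seq in_setT.
  have /hasP[A As xA] : has (fun A : {set T} => x \in A) s.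
    by rewrite has_count s1.
  by apply/bigcupP; exists A.
have {s1} : forall x, count (fun A : {set T} => x \in A) s <= 1.
  by move=> x; rewrite s1.
elim: s => // A s IH s1; rewrite pairwise_cons IH ?andbT; last first.
  by move=> x; apply: leq_trans (s1 x); rewrite leq_addl.
apply/allP=> B Bs; rewrite disjoint_subset; apply/subsetP=> x xA; rewrite inE.
apply/negP=> xB; have := s1 x; rewrite /= xA add1n ltnS leqNgt -has_count.
by move/negP; apply; apply/hasP; exists B.
Qed.

Lemma prod_rel_sym (T1 T2 : finType) (e1 : rel T1) (e2 : rel T2) :
  symmetric e1 -> symmetric e2 -> symmetric (prod_rel e1 e2).
Proof. by move=> s1 s2 u v; rewrite /prod_rel s1 s2. Qed.

Lemma remove_edges_sym (T : finType) (e : rel T) (S : {set {set T}}) :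
  symmetric e -> symmetric (remove_edges e S).
Proof. by move=> se x y; rewrite /remove_edges se setUC. Qed.

Section Components.
Variables (T : finType) (e : rel T).
Hypothesis sym_e : symmetric e.

Lemma component_connect C u v :
  component e C -> u \in C -> v \in C -> connect e u v.
Proof.
case=> x ->; rewrite !inE => xu xv.
by apply: connect_trans xv; rewrite (sym_connect_sym sym_e).
Qed.

Lemma component_eq C D u : component e C -> component e D ->
  u \in C -> u \in D -> C = D.
Proof.
suff sub F G : component e F -> component e G -> u \in F -> u \in G ->
    F \subset G.
  move=> hC hD uC uD; apply/eqP.
  by rewrite eqEsubset (sub _ _ hC hD uC uD) (sub _ _ hD hC uD uC).
move=> hF [x ->] uF; rewrite inE => xu; apply/subsetP=> v vF; rewrite inE.
exact: connect_trans xu (component_connect hF uF vF).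
Qed.

Lemma component_compl C D : component e C -> component e D ->
  C != D -> C :|: D = [set: T] -> D = ~: C.
Proof.
move=> hC hD neCD covCD; apply/setP=> v; rewrite inE.
case vC: (v \in C) => /=; last by have := in_setT v; rewrite -covCD inE vC.
by apply/negP=> vD; move: neCD; rewrite (component_eq hC hD vC vD) eqxx.
Qed.

End Components.

Definition two_step (T : finType) (e : rel T) : rel T :=
  fun x z => [exists m, e x m && e m z].

Lemma connect_two_step_parity (T : finType) (e : rel T) a x : connect e a x ->
  connect (two_step e) a x \/ exists2 n, e a n & connect (two_step e) n x.
Proof.
move/connectP=> [p]; elim: p a => [|w p IH] a /=; first by move=> _ ->; left.
case/andP=> eaw /IH/[apply] -[wx | [n ewn nx]]; first by right; exists w.
left; apply: connect_trans nx; apply: connect1; apply/existsP; exists w.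
by rewrite eaw ewn.
Qed.

Section Layers.
Variables (VG VH : finType) (eG : rel VG).
Implicit Types (B : {set VG * VH}) (X : {set VG}).

Definition layers_split_along X B :=
  exists p q : pred VH,
    forall x y, ((x, y) \in B) = if x \in X then p y else q y.

Definition nbhd_monochromatic B := forall x y,
  setX (nbhd eG x) [set y] \subset B \/ setX (nbhd eG x) [set y] \subset ~: B.

Lemma layers_split_along_type8 X B : layers_split_along X B -> type8 B (~: B).
Proof.
case=> p [q colB].
exists X, (~: X), [set y | p y && ~~ q y], [set y | ~~ p y && q y],
  [set y | ~~ p y && ~~ q y], [set y | p y && q y].
split; [|split; [|split]].
- by apply: is_partition_count => x; rewrite /= !inE; case: (x \in X).
- by apply: is_partition_count => y; rewrite /= !inE; case: (p y); case: (q y).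
- apply/setP=> [[x y]]; rewrite colB !inE /=.
  by case: (x \in X); case: (p y); case: (q y).
- apply/setP=> [[x y]]; rewrite inE colB !inE /=.
  by case: (x \in X); case: (p y); case: (q y).
Qed.

Lemma layers_split_along_setXT X : layers_split_along X (setX X [set: VH]).
Proof.
by exists predT, pred0 => x y; rewrite in_setX in_setT andbT; case: (x \in X).
Qed.

Section Monochromatic.
Variable B : {set VG * VH}.
Hypotheses (sym_eG : symmetric eG) (monoB : nbhd_monochromatic B).

Lemma monochromatic_common_nbr m u w y :
  eG m u -> eG m w -> ((u, y) \in B) = ((w, y) \in B).
Proof.
move=> mu mw.
have uN : (u, y) \in setX (nbhd eG m) [set y] by rewrite in_setX !inE mu /=.
have wN : (w, y) \in setX (nbhd eG m) [set y] by rewrite in_setX !inE mw /=.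
case: (monoB m y) => /subsetP sub; first by rewrite (sub _ uN) (sub _ wN).
by move: (sub _ uN) (sub _ wN); rewrite !inE => /negbTE-> /negbTE->.
Qed.

Lemma monochromatic_two_step y u v :
  connect (two_step eG) u v -> ((u, y) \in B) = ((v, y) \in B).
Proof.
move/connectP=> [p]; elim: p u => [|w p IH] u /=; first by move=> _ ->.
case/andP=> /existsP[m /andP[um mw]] /IH/[apply] <-.
by apply: (monochromatic_common_nbr (m := m)); rewrite // sym_eG.
Qed.

Lemma layers_split_along_parity x0 : (forall x, connect eG x0 x) ->
  layers_split_along [set x | connect (two_step eG) x0 x] B.
Proof.
move=> G_conn; exists (fun y => (x0, y) \in B).
exists (fun y => [exists n, eG x0 n && ((n, y) \in B)]) => x y.
rewrite inE; case: ifP => [even_x | odd_x].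
  by rewrite (monochromatic_two_step y even_x).
case: (connect_two_step_parity (G_conn x)) => [even_x | [n x0n nx]].
  by rewrite even_x in odd_x.
rewrite -(monochromatic_two_step y nx).
apply/idP/existsP => [nyB | [n' /andP[x0n' n'yB]]].
  by exists n; rewrite x0n.
by rewrite (monochromatic_common_nbr y x0n x0n').
Qed.

End Monochromatic.

Lemma component_setXT (r : rel (VG * VH)) B b0 x' :
  symmetric r -> {homo fst : u v / r u v >-> eG u v} ->
  component r B -> component r (~: B) -> b0 \in B -> ~~ connect eG b0.1 x' ->
  B = setX [set x | connect eG b0.1 x] [set: VH].
Proof.
move=> sym_r r_fst hB hW b0B nx'; set C := [set x | _].
have B_fst u : u \in B -> u.1 \in C.
  move=> uB; rewrite inE.
  exact: (connect_homo r_fst (component_connect sym_r hB b0B uB)).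
apply/setP=> [[x y]]; rewrite in_setX in_setT andbT.
apply/idP/idP => [/B_fst // | xC]; apply/negPn/negP; rewrite -in_setC => xyW.
have x'yW : (x', y) \in ~: B.
  by rewrite inE; apply: contra nx' => /B_fst; rewrite inE.
have /= xx' := connect_homo r_fst (component_connect sym_r hW xyW x'yW).
by rewrite inE in xC; rewrite (connect_trans xC xx') in nx'.
Qed.

End Layers.

Theorem corollary2p8 (VG VH : finType) (eG : rel VG) (eH : rel VH)
  (hG : simple_graph eG) (hH : simple_graph eH)
  (hdeg : mindeg eG <= mindeg eH)
  (S : {set {set VG * VH}}) (hS : min_edge_cut (prod_rel eG eH) S)
  (B W : {set VG * VH})
  (hB : component (remove_edges (prod_rel eG eH) S) B)
  (hW : component (remove_edges (prod_rel eG eH) S) W)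
  (hBW : B != W) (hcov : B :|: W = [set: VG * VH])
  (hN : forall (x : VG) (y : VH),
      setX (nbhd eG x) [set y] \subset B \/ setX (nbhd eG x) [set y] \subset W) :
  type_2468 B W \/ type_2468 W B.
Proof.
have [[sG _] [sH _]] := (hG, hH).
set r := remove_edges (prod_rel eG eH) S.
have sym_r : symmetric r := remove_edges_sym S (prod_rel_sym sG sH).
have r_fst : {homo fst : u v / r u v >-> eG u v} by move=> u v /andP[/andP[]].
have WE := component_compl sym_r hB hW hBW hcov; subst W.
left; do 3 right.
have [b0 b0B] : exists b0, b0 \in B by case: hB => b ->; exists b; rewrite inE.
have [X splitB] : exists X, layers_split_along X B.
  case: (boolP [forall x, connect eG b0.1 x]) => [/forallP G_conn | ].
    exists [set x | connect (two_step eG) b0.1 x].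
    exact: layers_split_along_parity.
  case/forallPn=> x' nx'; exists [set x | connect eG b0.1 x].
  rewrite (component_setXT sym_r r_fst hB hW b0B nx').
  exact: layers_split_along_setXT.
exact: layers_split_along_type8 splitB.
Qed.
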